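(* Let $d\ge3$, $h\ge1$. For each non-leaf vertex $i$ of $\mathcal{T}(d,h)$ choose a child $m_i$ of $i$ and put $J_i:=C_i\setminus\{m_i\}$, where $C_i$ is the set of children of $i$. Define $F(d,h):=\{0\}\cup\bigcup_{q=0}^{(h-2)/2}\bigcup_{i\in S_{2q+1}}J_i$ if $h$ is even, and $F(d,h):=\bigcup_{q=0}^{(h-1)/2}\bigcup_{i\in S_{2q}}J_i$ if $h$ is odd, where $S_k$ is the set of vertices at distance $k$ from the root $0$. Then $G(d,h)$ is generated by $\{\bar{\mathbf{x}}_i : i\in F(d,h)\}$.
   Context: Let $\mathcal{T}(d,h)$ be the rooted tree in which the root $0$ has $d$ children, every vertex at distance $1,\dots,h-1$ from the root has $d-1$ children, and the vertices at distance $h$ are leaves. Let $V$ be its vertex set, $A$ its adjacency matrix, $\Delta := dI-A$, and $\Lambda\subset\mathbb{Z}^V$ the lattice spanned by the rows of $\Delta$. Then $G(d,h):=\mathbb{Z}^V/\Lambda$; $\{\mathbf{x}_i:i\in V\}$ is the standard basis of $\mathbb{Z}^V$ and $\bar{\mathbf{v}}$ denotes the image of $\mathbf{v}$ in $G(d,h)$. *)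

From HB Require Import structures.
From mathcomp Require Import all_boot all_order all_algebra.
Set Implicit Arguments. Unset Strict Implicit. Unset Printing Implicit Defensive.
Import Order.TTheory GRing.Theory Num.Theory.
Local Open Scope ring_scope.

(* Vertices of T(d,h) are encoded as paths from the root: a word w of child
   indices; the root is [::], the children of the root are [:: c] with c < d,
   and the children of a non-root vertex w are rcons w c with c < d-1.
   The distance of w from the root is size w. *)
Fixpoint level (d k : nat) : seq (seq nat) :=
  match k with
  | 0 => [:: [::]]
  | k'.+1 => [seq rcons w c | w <- level d k',
               c <- iota 0 (if k' is 0 then d else d.-1)]
  end.

Definition verts (d h : nat) : seq (seq nat) :=
  flatten [seq level d k | k <- iota 0 h.+1].

Definition V (d h : nat) : finType := seq_sub (verts d h).

Definition isChild d h (u v : V d h) : bool :=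
  (size (val v) == (size (val u)).+1) && (take (size (val u)) (val v) == val u).

Definition adj d h (u v : V d h) : bool := isChild u v || isChild v u.

Definition children d h (i : V d h) : {set V d h} := [set j | isChild i j].

Definition S d h (k : nat) : {set V d h} := [set i | size (val i) == k].

Definition J d h (m : V d h -> V d h) (i : V d h) : {set V d h} :=
  children i :\ m i.

Definition F d h (m : V d h -> V d h) : {set V d h} :=
  if ~~ odd h then
    [set i | val i == [::]] :|:
      \bigcup_(q < ((h - 2) %/ 2).+1) \bigcup_(i in S d h (2 * q).+1) J m i
  else
    \bigcup_(q < ((h - 1) %/ 2).+1) \bigcup_(i in S d h (2 * q)) J m i.

Definition xb d h (i : V d h) : {ffun V d h -> int} :=
  [ffun j => (i == j)%:R].

Definition Delta d h (i : V d h) : {ffun V d h -> int} :=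
  [ffun j => (d%:Z) * (i == j)%:R - (adj i j)%:R].

Definition inLambda d h (v : {ffun V d h -> int}) : Prop :=
  exists a : V d h -> int, v = \sum_(k : V d h) Delta k *~ a k.

(* G(d,h) = Z^V / Lambda is generated by the classes of x_i, i in X:
   every class \bar{x}_j is an integer combination of those classes. *)
Definition generates d h (X : {set V d h}) : Prop :=
  forall j : V d h, exists c : V d h -> int,
    inLambda (xb j - \sum_(i in X) xb i *~ c i).

From HB Require Import structures.
From mathcomp Require Import all_boot all_order all_algebra zify.
Set Implicit Arguments. Unset Strict Implicit. Unset Printing Implicit Defensive.
Import Order.TTheory GRing.Theory Num.Theory.

(* Let H be the subgroup of G(d,h) generated by the classes of F, and call
   h - |v| the height of a vertex v.  Row k of Delta says that d x_k is the
   sum of the x_j over the neighbours j of k, so if x_k and all neighbours of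
   k but one lie in H, so does the last one.  Going up from the leaves, every
   vertex v of odd height lies in H: a child l of v in J_v lies in F, and the
   other neighbours of l are its children, of odd height two less than v.
   Going down from the root (which is in F when its height h is even), a
   vertex v of even height with parent p is either in J_p, which is part of F
   since p has odd height, or it is m_p; then p, the parent of p and the
   siblings of v lie in H, hence so does v. *)

Lemma take_size_rcons (T : Type) (s : seq T) x : take (size s) (rcons s x) = s.
Proof. by rewrite -cats1 take_size_cat. Qed.

Definition arity (d k : nat) : nat := if k is 0 then d else d.-1.

Lemma size_level d k w : w \in level d k -> size w = k.
Proof.
elim: k w => [|k IH] w /=; first by rewrite inE => /eqP ->.
by case/allpairsPdep => x [y [/IH <- _ ->]]; rewrite size_rcons.
Qed.

Lemma rcons_level d k w c :
  w \in level d k -> (c < arity d k)%N -> rcons w c \in level d k.+1.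
Proof.
move=> w_k c_lt; apply: (allpairs_f_dep (fun w c => rcons w c)) => //.
by rewrite mem_iota add0n; case: k w_k c_lt.
Qed.

Lemma levelS_rcons d k x :
  x \in level d k.+1 -> exists w c, x = rcons w c /\ w \in level d k.
Proof. by case/allpairsPdep => w [c [w_k _ ->]]; exists w, c. Qed.

Lemma mem_verts d h w :
  (w \in verts d h) = (size w <= h)%N && (w \in level d (size w)).
Proof.
apply/flatten_mapP/andP => [[k]|[w_h w_lvl]].
  by rewrite mem_iota add0n ltnS => k_h w_k; rewrite (size_level w_k).
by exists (size w); rewrite // mem_iota add0n ltnS.
Qed.

Section Tree.
Variables d h : nat.
Implicit Types u v : V d h.

Lemma size_V v : (size (val v) <= h)%N.
Proof. by case: v => w /=; rewrite mem_verts => /andP []. Qed.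

Lemma val_level v : val v \in level d (size (val v)).
Proof. by case: v => w /=; rewrite mem_verts => /andP []. Qed.

Lemma isChild_size u v : isChild u v -> size (val v) = (size (val u)).+1.
Proof. by case/andP => /eqP. Qed.

Lemma eq_parent u u' v : isChild u v -> isChild u' v -> u = u'.
Proof.
move=> uv u'v; apply: val_inj.
have size_uu' : size (val u) = size (val u').
  by move: (isChild_size uv) (isChild_size u'v) => -> [].
case/andP: uv => _ /eqP <-; case/andP: u'v => _ /eqP <-.
by rewrite size_uu'.
Qed.

Lemma exists_parent v : (0 < size (val v))%N -> exists p, isChild p v.
Proof.
have := size_V v; have := val_level v.
case: (size _) => [//|k] /levelS_rcons [w [c [def_v w_k]]] v_h _.
have w_V : w \in verts d h by rewrite mem_verts (size_level w_k) w_k andbT ltnW.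
exists (SeqSub w_V).
by rewrite /isChild /= def_v size_rcons take_size_rcons (size_level w_k) !eqxx.
Qed.

Lemma exists_child v c :
  (size (val v) < h)%N -> (c < arity d (size (val v)))%N ->
  exists u, isChild v u /\ val u = rcons (val v) c.
Proof.
move=> v_h c_lt; have vc_V : rcons (val v) c \in verts d h.
  by rewrite mem_verts size_rcons v_h rcons_level ?val_level.
by exists (SeqSub vc_V); rewrite /isChild /= size_rcons take_size_rcons !eqxx.
Qed.

Lemma J_neq0 (m : V d h -> V d h) v :
  (3 <= d)%N -> (size (val v) < h)%N -> J m v != set0.
Proof.
move=> d_ge3 v_h; apply/set0Pn.
have two_lt : (1 < arity d (size (val v)))%N.
  by rewrite /arity; case: (size _); lia.
have [u0 [v_u0 val_u0]] := exists_child v_h (ltnW two_lt).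
have [u1 [v_u1 val_u1]] := exists_child v_h two_lt.
have u0_u1 : u0 != u1.
  apply/eqP => /(congr1 (fun u => last 0%N (val u))).
  by rewrite /= val_u0 val_u1 !last_rcons.
case: (eqVneq u0 (m v)) => [m_u0|u0_m].
  by exists u1; rewrite !inE -m_u0 eq_sym u0_u1 v_u1.
by exists u0; rewrite !inE u0_m v_u0.
Qed.

Lemma odd_height_lt v : odd (h - size (val v)) -> (size (val v) < h)%N.
Proof. by rewrite -subn_gt0; case: (h - _). Qed.

Lemma J_sub_F (m : V d h -> V d h) v :
  odd (h - size (val v)) -> J m v \subset F m.
Proof.
set s := size (val v) => odd_hs; apply/subsetP => c c_J.
have s_lt_h := odd_height_lt odd_hs.
have odd_s : odd s = ~~ odd h.
  by move: odd_hs; rewrite oddB ?(ltnW s_lt_h); case: (odd h); case: (odd s).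
have := odd_double_half h; have := odd_double_half s.
rewrite /F odd_s; case: (odd h) => /= def_s def_h.
  have q_lt : (s./2 < ((h - 1) %/ 2).+1)%N by lia.
  apply/bigcupP; exists (Ordinal q_lt) => //; apply/bigcupP; exists v => //.
  by rewrite inE; apply/eqP; rewrite /= -/s; lia.
have q_lt : (s./2 < ((h - 2) %/ 2).+1)%N by lia.
apply/setUP; right; apply/bigcupP; exists (Ordinal q_lt) => //.
apply/bigcupP; exists v => //.
by rewrite inE; apply/eqP; rewrite /= -/s; lia.
Qed.

Lemma root_in_F (m : V d h -> V d h) v :
  ~~ odd h -> size (val v) = 0%N -> v \in F m.
Proof. by rewrite /F => /negPf -> /size0nil v0; rewrite /= !inE v0. Qed.

End Tree.

Local Open Scope ring_scope.

Section IntSpan.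
Variables (I : finType) (M : zmodType) (f : I -> M).

Definition zspan (v : M) : Prop := exists a : I -> int, v = \sum_i f i *~ a i.

Lemma zspan0 : zspan 0.
Proof. by exists (fun=> 0); rewrite big1 // => i _; rewrite mulr0z. Qed.

Lemma zspanD u v : zspan u -> zspan v -> zspan (u + v).
Proof.
move=> [a ->] [b ->]; exists (fun i => a i + b i).
by rewrite -big_split; apply: eq_bigr => i _; rewrite mulrzDr.
Qed.

Lemma zspanMz u z : zspan u -> zspan (u *~ z).
Proof.
move=> [a ->]; exists (fun i => a i * z).
by rewrite mulrz_suml; apply: eq_bigr => i _; rewrite mulrzA.
Qed.

Lemma zspan_gen i : zspan (f i).
Proof.
exists (fun j => (j == i)%:R); rewrite (bigD1 i) //= eqxx mulr1z big1 ?addr0 //.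
by move=> j /negPf ->; rewrite mulr0z.
Qed.

End IntSpan.

Section Spanned.
Variables (d h : nat) (X : {set V d h}).
Implicit Types (x y : {ffun V d h -> int}) (k u v : V d h).

(* [inLambda] unfolds to [zspan (@Delta d h)], so the [zspan] lemmas apply. *)
Definition spanned x : Prop :=
  exists c : V d h -> int, inLambda (x - \sum_(i in X) xb i *~ c i).

Lemma spanned_Lambda x : inLambda x -> spanned x.
Proof.
by exists (fun=> 0); rewrite big1 ?subr0 // => i _; rewrite mulr0z.
Qed.

Lemma spannedD x y : spanned x -> spanned y -> spanned (x + y).
Proof.
move=> [a Lx] [b Ly]; exists (fun i => a i + b i).
have -> : \sum_(i in X) xb i *~ (a i + b i) =
          \sum_(i in X) xb i *~ a i + \sum_(i in X) xb i *~ b i.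
  by rewrite -big_split; apply: eq_bigr => i _; rewrite mulrzDr.
by rewrite opprD addrACA; apply: zspanD.
Qed.

Lemma spannedMz x z : spanned x -> spanned (x *~ z).
Proof.
move=> [a Lx]; exists (fun i => a i * z).
have -> : \sum_(i in X) xb i *~ (a i * z) = (\sum_(i in X) xb i *~ a i) *~ z.
  by rewrite mulrz_suml; apply: eq_bigr => i _; rewrite mulrzA.
by rewrite -mulrzBl; apply: zspanMz.
Qed.

Lemma spannedB x y : spanned x -> spanned y -> spanned (x - y).
Proof. by move=> Sx /(spannedMz (-1)); rewrite mulrN1z; apply: spannedD. Qed.

Lemma spanned_sum (K : finType) (P : pred K) (w : K -> {ffun V d h -> int}) :
  (forall j, P j -> spanned (w j)) -> spanned (\sum_(j | P j) w j).
Proof.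
move=> Sw; elim/big_rec: _ => [|j x Pj Sx]; first exact/spanned_Lambda/zspan0.
by apply: spannedD => //; apply: Sw.
Qed.

Lemma spanned_xb i : i \in X -> spanned (xb i).
Proof.
move=> iX; exists (fun j => (j == i)%:R).
rewrite (bigD1 i) //= eqxx mulr1z big1 ?addr0 ?subrr; first exact: zspan0.
by move=> j /andP [_ /negPf ->]; rewrite mulr0z.
Qed.

Lemma DeltaE k : Delta k = xb k *~ d - \sum_(j | adj k j) xb j.
Proof.
apply/ffunP => j; rewrite !ffunE sum_ffunE ffunMzE ffunE mulrzz mulrC.
congr (_ - _); rewrite big_mkcond (bigD1 j) //= !ffunE eqxx big1 ?addr0.
  by case: (adj k j).
by move=> i /negPf ij; rewrite ffunE ij; case: (adj k i).
Qed.

Lemma spanned_neighbour k u :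
  adj k u -> spanned (xb k) ->
  (forall j, adj k j -> j != u -> spanned (xb j)) -> spanned (xb u).
Proof.
move=> ku Sk Sj.
have -> : xb u = xb k *~ d - Delta k - \sum_(j | adj k j && (j != u)) xb j.
  by rewrite DeltaE (bigD1 u) //= opprB addrCA subrr addr0 addrK.
apply: spannedB; first apply: spannedB.
- exact: spannedMz.
- exact/spanned_Lambda/zspan_gen.
by apply: spanned_sum => j /andP [] /Sj.
Qed.

Lemma spanned_parent v c :
  isChild v c -> spanned (xb c) -> (forall j, isChild c j -> spanned (xb j)) ->
  spanned (xb v).
Proof.
move=> vc Sc Sj; apply: (spanned_neighbour (k := c)); rewrite /adj ?vc ?orbT //.
by move=> j /orP [/Sj //|jc]; rewrite (eq_parent jc vc) eqxx.
Qed.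

Lemma spanned_child p v :
  isChild p v -> spanned (xb p) -> (forall g, isChild g p -> spanned (xb g)) ->
  (forall j, isChild p j -> j != v -> spanned (xb j)) -> spanned (xb v).
Proof.
move=> pv Sp Sg Sj; apply: (spanned_neighbour (k := p)); rewrite /adj ?pv //.
by move=> j /orP [/Sj|/Sg //].
Qed.

End Spanned.

Section Generation.
Variables (d h : nat) (m : V d h -> V d h).
Hypothesis d_ge3 : (3 <= d)%N.
Implicit Types v : V d h.

Lemma spanned_by_grandchildren v :
  odd (h - size (val v)) ->
  (forall l j, isChild v l -> isChild l j -> spanned (F m) (xb j)) ->
  spanned (F m) (xb v).
Proof.
move=> odd_v Sj; have := J_neq0 m d_ge3 (odd_height_lt odd_v).
case/set0Pn=> l l_J; have v_l : isChild v l by case/setD1P: l_J; rewrite inE.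
apply: (spanned_parent v_l) => [|j]; last exact: Sj v_l.
by apply: spanned_xb; apply: (subsetP (J_sub_F m odd_v)).
Qed.

Lemma spanned_odd_height v : odd (h - size (val v)) -> spanned (F m) (xb v).
Proof.
move=> odd_v; have := odd_double_half (h - size (val v)); rewrite odd_v.
move: (_./2) => t def_t.
have {odd_v def_t} : (h - size (val v))%N = t.*2.+1 by lia.
elim: t v => [|t IH] v def_t; apply: spanned_by_grandchildren => [|l j v_l l_j];
  rewrite ?def_t /= ?odd_double //;
  have := size_V j; rewrite (isChild_size l_j) (isChild_size v_l) => j_h.
  by exfalso; lia.
by apply: IH; rewrite (isChild_size l_j) (isChild_size v_l); lia.
Qed.

Lemma spanned_all v : spanned (F m) (xb v).
Proof.
have [k] := ubnP (size (val v)); elim: k v => // k IH v v_k.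
have [odd_v|even_v] := boolP (odd (h - size (val v))).
  exact: spanned_odd_height.
have [v0|v_gt0] := posnP (size (val v)).
  by apply/spanned_xb/root_in_F; move: even_v; rewrite v0 ?subn0.
have [p p_v] := exists_parent v_gt0.
have p_h : (size (val p) < h)%N by rewrite -(isChild_size p_v) size_V.
have odd_p : odd (h - size (val p)).
  by rewrite -(subnSK p_h) /= -(isChild_size p_v).
have J_F := subsetP (J_sub_F m odd_p).
have [v_m|v_J] := eqVneq v (m p); last first.
  by apply/spanned_xb/J_F; rewrite !inE v_J.
apply: (spanned_child p_v).
- by apply: IH; rewrite -ltnS -(isChild_size p_v).
- by move=> g g_p; apply: IH; move: (isChild_size g_p) (isChild_size p_v); lia.
by move=> j p_j j_v; apply/spanned_xb/J_F; rewrite !inE -v_m j_v.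
Qed.

End Generation.

Theorem lemma6p4 (d h : nat) (hd : (3 <= d)%N) (hh : (1 <= h)%N)
  (m : V d h -> V d h)
  (hm : forall i : V d h, children i != set0 -> m i \in children i) :
  generates (F m).
Proof.
by move=> j; apply: spanned_all.
Qed.
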